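(* Let $d:\mathbb{Z}\to\mathbb{C}$ with $d(n)\to0$ as $|n|\to\infty$, and let $(Ju)(n)=u(n-1)+d(n)u(n)+u(n+1)$ on $\ell^2(\mathbb{Z})$. Suppose that (i) for every $n\in\mathbb{Z}$, $\Im(d(n))=0$ or $\Im(d(n+1))=0$; (ii) $\Im(d(n))\ne0$ for infinitely many $n\in\mathbb{Z}$. If $\sum_{k\in\mathbb{Z}}|k|\,|\Re(d(k))|<\infty$, then $J$ has no boundary eigenvalues.
   Context: The numerical range is $\operatorname{Num}(J)=\{\langle Ju,u\rangle:\|u\|=1\}$, and a boundary eigenvalue of $J$ is an eigenvalue of $J$ lying in the topological boundary of $\operatorname{Num}(J)$. *)

From Stdlib Require Import Reals ZArith.
Open Scope R_scope.

Definition Cx : Type := (R * R)%type.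
Definition Re (z : Cx) : R := fst z.
Definition Im (z : Cx) : R := snd z.
Definition C0 : Cx := (0, 0).
Definition Cadd (z w : Cx) : Cx := (Re z + Re w, Im z + Im w).
Definition Csub (z w : Cx) : Cx := (Re z - Re w, Im z - Im w).
Definition Cmul (z w : Cx) : Cx :=
  (Re z * Re w - Im z * Im w, Re z * Im w + Im z * Re w).
Definition Cconj (z : Cx) : Cx := (Re z, - Im z).
Definition Cnorm2 (z : Cx) : R := Re z * Re z + Im z * Im z.
Definition Cmod (z : Cx) : R := sqrt (Cnorm2 z).

Definition zsum_to (f : Z -> R) (s : R) : Prop :=
  infinite_sum (fun k : nat => f (Z.of_nat k) + f (- Z.of_nat k - 1)%Z) s.
Definition zsum_toC (f : Z -> Cx) (s : Cx) : Prop :=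
  zsum_to (fun n => Re (f n)) (Re s) /\ zsum_to (fun n => Im (f n)) (Im s).

Definition l2 (u : Z -> Cx) : Prop := exists s, zsum_to (fun n => Cnorm2 (u n)) s.

Definition Jop (d : Z -> Cx) (u : Z -> Cx) (n : Z) : Cx :=
  Cadd (Cadd (u (n - 1)%Z) (Cmul (d n) (u n))) (u (n + 1)%Z).

(* Num(J) = { <Ju,u> : ||u|| = 1 },  <v,u> = sum_n v(n) conj(u(n)) *)
Definition NumRange (d : Z -> Cx) (z : Cx) : Prop :=
  exists u : Z -> Cx,
    zsum_to (fun n => Cnorm2 (u n)) 1 /\
    zsum_toC (fun n => Cmul (Jop d u n) (Cconj (u n))) z.

Definition in_closure (S : Cx -> Prop) (z : Cx) : Prop :=
  forall eps, 0 < eps -> exists w, S w /\ Cmod (Csub w z) < eps.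
Definition in_interior (S : Cx -> Prop) (z : Cx) : Prop :=
  exists eps, 0 < eps /\ forall w, Cmod (Csub w z) < eps -> S w.
Definition in_boundary (S : Cx -> Prop) (z : Cx) : Prop :=
  in_closure S z /\ ~ in_interior S z.

Definition eigenvalue (d : Z -> Cx) (lam : Cx) : Prop :=
  exists u : Z -> Cx, l2 u /\ (exists n, u n <> C0) /\
    forall n, Jop d u n = Cmul lam (u n).

Definition boundary_eigenvalue (d : Z -> Cx) (lam : Cx) : Prop :=
  eigenvalue d lam /\ in_boundary (NumRange d) lam.

(* Let lam be an eigenvalue with eigenvector u of squared norm U.
   1. Interior criterion: if u(m) <> 0 and Im d(m) <> Im lam, the test vectors
      k (a u + s delta_m) realise lam + (A s + |s|^2 B) / (U + |s|^2 V) with A <> 0, and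
      A s + |s|^2 G = C is solvable for small C (intermediate value theorem), so lam is
      interior.  At a boundary eigenvalue, Im d(m) = Im lam wherever u(m) <> 0.
   2. As d -> 0 and u never vanishes at two consecutive sites, Im lam = 0; so u vanishes
      at the infinitely many sites where Im d <> 0.
   3. Re u and Im u solve x(n-1) + Re d(n) x(n) + x(n+1) = Re lam x(n), decay and have
      unbounded zeros; with a summable first moment this forces x = 0: for |lam| > 2 |x|
      grows after a zero, for |lam| < 2 the energy x(n)^2 + x(n+1)^2 - lam x(n) x(n+1) is
      almost conserved, for lam = +-2 x keeps increasing after a zero. *)

From Stdlib Require Import Reals ZArith Lra Lia Psatz Classical.
Open Scope R_scope.

Definition scale (r : R) (z : Cx) : Cx := (r * Re z, r * Im z).

Lemma Cx_ext (z w : Cx) : Re z = Re w -> Im z = Im w -> z = w.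
Proof. destruct z, w; unfold Re, Im; simpl; intros; subst; auto. Qed.

Lemma Cnorm2_nonneg z : 0 <= Cnorm2 z.
Proof. destruct z; unfold Cnorm2, Re, Im; simpl; nra. Qed.

Lemma Cnorm2_pos z : z <> C0 -> 0 < Cnorm2 z.
Proof.
  destruct z as [a b]; unfold Cnorm2, C0, Re, Im; simpl; intros Hz.
  destruct (Req_dec a 0) as [->|Ha].
  - assert (b <> 0) by (intros ->; auto). pose proof (Rsqr_pos_lt b H). unfold Rsqr in *; nra.
  - pose proof (Rsqr_pos_lt a Ha). pose proof (Rle_0_sqr b). unfold Rsqr in *; nra.
Qed.

Lemma Cnorm2_mul z w : Cnorm2 (Cmul z w) = Cnorm2 z * Cnorm2 w.
Proof. destruct z, w; unfold Cnorm2, Cmul, Re, Im; simpl; ring. Qed.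

Lemma Cnorm2_conj z : Cnorm2 (Cconj z) = Cnorm2 z.
Proof. destruct z; unfold Cnorm2, Cconj, Re, Im; simpl; ring. Qed.

Lemma Cnorm2_scale r z : Cnorm2 (scale r z) = r * r * Cnorm2 z.
Proof. destruct z; unfold Cnorm2, scale, Re, Im; simpl; ring. Qed.

Lemma Cnorm2_sub_le z w : Cnorm2 (Csub z w) <= 2 * Cnorm2 z + 2 * Cnorm2 w.
Proof.
  destruct z as [z1 z2], w as [w1 w2]; unfold Cnorm2, Csub, Re, Im; simpl.
  pose proof (Rle_0_sqr (z1 + w1)); pose proof (Rle_0_sqr (z2 + w2)); unfold Rsqr in *; nra.
Qed.

Lemma Cmul_div a q : 0 < Cnorm2 a -> Cmul a (scale (1 / Cnorm2 a) (Cmul q (Cconj a))) = q.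
Proof.
  destruct a as [a1 a2], q as [q1 q2]; unfold Cnorm2, scale, Cmul, Cconj, Re, Im; simpl; intros H.
  apply Cx_ext; unfold Re, Im; simpl; field; lra.
Qed.

Lemma abs_Im_le_Cmod z : Rabs (Im z) <= Cmod z.
Proof.
  unfold Cmod, Cnorm2. rewrite <- sqrt_Rsqr_abs. apply sqrt_le_1_alt.
  pose proof (Rle_0_sqr (Re z)). unfold Rsqr in *; lra.
Qed.

Lemma Rdiv_le_0_compat a b : 0 <= a -> 0 < b -> 0 <= a / b.
Proof. intros; unfold Rdiv; apply Rmult_le_pos; [|apply Rlt_le, Rinv_0_lt_compat]; auto. Qed.

Lemma Rsqr_lt_abs y e : Rabs y < e -> y * y < e * e.
Proof.
  intros H. pose proof (Rabs_pos y).
  assert (y * y = Rabs y * Rabs y) by (rewrite <- Rabs_mult; symmetry; apply Rabs_pos_eq; nra). nra.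
Qed.

Lemma Rabs_lt_sqr y e : 0 < e -> y * y < e * e -> Rabs y < e.
Proof. intros He H. destruct (Rcase_abs y); [rewrite Rabs_left|rewrite Rabs_right]; nra. Qed.

Definition pairf (f : Z -> R) (k : nat) : R := f (Z.of_nat k) + f (- Z.of_nat k - 1)%Z.

Lemma infinite_sum_partial a b l :
  (forall N, sum_f_R0 a N = sum_f_R0 b N) -> infinite_sum a l -> infinite_sum b l.
Proof. intros H Hs eps he. destruct (Hs eps he) as [N HN]; exists N; intros n Hn. rewrite <- H; auto. Qed.

Lemma infinite_sum_Un_cv b U l :
  (forall N, U N = sum_f_R0 b N) -> Un_cv U l -> infinite_sum b l.
Proof. intros H Hs eps he. destruct (Hs eps he) as [N HN]; exists N; intros n Hn. rewrite <- H; auto. Qed.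

Lemma zsum_ext f g S : (forall n, f n = g n) -> zsum_to f S -> zsum_to g S.
Proof. unfold zsum_to; intros H. apply infinite_sum_partial. intros N; apply sum_eq; intros; rewrite !H; auto. Qed.

Lemma zsum_plus f g S T : zsum_to f S -> zsum_to g T -> zsum_to (fun n => f n + g n) (S + T).
Proof.
  unfold zsum_to; intros Hf Hg. eapply infinite_sum_Un_cv; [|exact (CV_plus _ _ _ _ Hf Hg)].
  intros N; simpl. rewrite <- sum_plus. apply sum_eq; intros; ring.
Qed.

Lemma zsum_scal f S c : zsum_to f S -> zsum_to (fun n => c * f n) (c * S).
Proof.
  unfold zsum_to; intros Hf.
  assert (Hc : Un_cv (fun _ => c) c).
  { intros eps he; exists 0%nat; intros; unfold Rdist. rewrite Rminus_diag, Rabs_R0; lra. }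
  eapply infinite_sum_Un_cv; [|exact (CV_mult _ _ _ _ Hc Hf)].
  intros N; simpl. rewrite scal_sum. apply sum_eq; intros; ring.
Qed.

Definition zdelta (m : Z) (v : R) (n : Z) : R := if Z.eq_dec n m then v else 0.

Lemma zsum_delta m v : zsum_to (zdelta m v) v.
Proof.
  set (k0 := Z.to_nat (if Z_le_dec 0 m then m else (- m - 1)%Z)).
  assert (Ht : forall k, pairf (zdelta m v) k = if Nat.eq_dec k k0 then v else 0).
  { intros k; unfold pairf, zdelta, k0. destruct (Z_le_dec 0 m);
    repeat (destruct Z.eq_dec; try lia); destruct Nat.eq_dec; try lia; lra. }
  assert (Hp : forall N, sum_f_R0 (pairf (zdelta m v)) N = if le_dec k0 N then v else 0).
  { intros N. rewrite (sum_eq _ (fun k => if Nat.eq_dec k k0 then v else 0)) by (intros; apply Ht).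
    induction N; cbn [sum_f_R0]; rewrite ?IHN; repeat destruct Nat.eq_dec; repeat destruct le_dec;
      try lia; lra. }
  intros eps he. exists k0. intros n Hn. change (Rdist (sum_f_R0 (pairf (zdelta m v)) n) v < eps).
  rewrite Hp. destruct le_dec; try lia. unfold Rdist. rewrite Rminus_diag, Rabs_R0; lra.
Qed.

Lemma zsum_perturb3 (g f : Z -> R) G c m1 m2 m3 h1 h2 h3 :
  zsum_to g G -> (forall n, f n = c * g n + (zdelta m1 h1 n + zdelta m2 h2 n + zdelta m3 h3 n)) ->
  zsum_to f (c * G + (h1 + h2 + h3)).
Proof.
  intros Hg Hf. eapply zsum_ext; [intros n; symmetry; apply Hf|].
  apply zsum_plus; [apply zsum_scal; auto|]. repeat apply zsum_plus; apply zsum_delta.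
Qed.

Lemma sum_ge_term (a : nat -> R) N k : (forall i, 0 <= a i) -> (k <= N)%nat -> a k <= sum_f_R0 a N.
Proof.
  intros H; induction N; intros Hk.
  - assert (k = 0%nat) by lia; subst; simpl; lra.
  - rewrite tech5. pose proof (H (S N)). destruct (Nat.eq_dec k (S N)) as [->|Hn].
    + pose proof (cond_pos_sum a N H). lra.
    + specialize (IHN ltac:(lia)). lra.
Qed.

Lemma zsum_term f S : zsum_to f S -> (forall n, 0 <= f n) -> forall m, f m <= S.
Proof.
  intros Hs Hf m.
  assert (Hpair : forall k, 0 <= pairf f k).
  { intros k; unfold pairf; pose proof (Hf (Z.of_nat k)); pose proof (Hf (- Z.of_nat k - 1)%Z); lra. }
  set (k := Z.to_nat (if Z_le_dec 0 m then m else (- m - 1)%Z)).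
  assert (Hp : f m <= pairf f k).
  { unfold pairf, k. pose proof (Hf (- m - 1)%Z). destruct (Z_le_dec 0 m).
    - rewrite Z2Nat.id by lia. lra.
    - rewrite Z2Nat.id by lia. replace (- (- m - 1) - 1)%Z with m by lia. lra. }
  eapply Rle_trans; [exact Hp|]. eapply Rle_trans; [apply (sum_ge_term (pairf f) k k); auto|].
  apply sum_incr; [exact Hs|auto].
Qed.

Fixpoint ssum (f : nat -> R) (k : nat) : R :=
  match k with O => 0 | S k' => ssum f k' + f k' end.

Lemma ssum_nonneg f k : (forall i, 0 <= f i) -> 0 <= ssum f k.
Proof. intros H; induction k; simpl; [lra|specialize (H k); lra]. Qed.

Lemma ssum_le f g k : (forall i, f i <= g i) -> ssum f k <= ssum g k.
Proof. intros H; induction k; simpl; [lra|specialize (H k); lra]. Qed.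

Lemma ssum_ext f g k : (forall i, f i = g i) -> ssum f k = ssum g k.
Proof. intros H; induction k; simpl; [lra|rewrite IHk, H; lra]. Qed.

Lemma ssum_sum g j : ssum g (S j) = sum_f_R0 g j.
Proof. induction j; simpl; [lra|]. simpl in IHj. rewrite <- IHj. lra. Qed.

Lemma zsum_tail f Sv : zsum_to f Sv -> (forall n, 0 <= f n) -> forall eps, 0 < eps ->
  exists K : nat, forall k, (K <= k)%nat -> forall j, ssum (fun i => pairf f (k + i)) j < eps.
Proof.
  intros Hs Hf eps he.
  destruct (Hs (eps / 2) ltac:(lra)) as [K1 HK1].
  exists (S K1). intros k Hk j. destruct j as [|j]; [simpl; lra|].
  rewrite ssum_sum.
  pose proof (tech2 (pairf f) (k - 1) (k + j) ltac:(lia)) as T.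
  replace (k + j - S (k - 1))%nat with j in T by lia.
  rewrite (sum_eq (fun i => pairf f (S (k - 1) + i)) (fun i => pairf f (k + i))) in T
    by (intros; f_equal; lia).
  pose proof (HK1 (k + j)%nat ltac:(lia)) as A1. pose proof (HK1 (k - 1)%nat ltac:(lia)) as A2.
  change (sum_f_R0 (fun k0 : nat => f (Z.of_nat k0) + f (- Z.of_nat k0 - 1)%Z))
    with (sum_f_R0 (pairf f)) in A1, A2.
  unfold Rdist in A1, A2. apply Rabs_def2 in A1. apply Rabs_def2 in A2. lra.
Qed.

(** * Unique continuation for three-term recurrences *)

Lemma two_sided_induction (P : Z -> Prop) a :
  P a -> P (a + 1)%Z ->
  (forall n, P (n - 1)%Z -> P n -> P (n + 1)%Z) ->
  (forall n, P n -> P (n + 1)%Z -> P (n - 1)%Z) -> forall n, P n.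
Proof.
  intros H0 H1 Hup Hdown.
  assert (Hf : forall k : nat, P (a + Z.of_nat k)%Z /\ P (a + Z.of_nat k + 1)%Z).
  { induction k as [|k [IH1 IH2]].
    - rewrite Z.add_0_r. auto.
    - replace (a + Z.of_nat (S k))%Z with (a + Z.of_nat k + 1)%Z by lia. split; auto.
      apply Hup; auto. replace (a + Z.of_nat k + 1 - 1)%Z with (a + Z.of_nat k)%Z by lia. auto. }
  assert (Hb : forall k : nat, P (a - Z.of_nat k)%Z /\ P (a - Z.of_nat k + 1)%Z).
  { induction k as [|k [IH1 IH2]].
    - rewrite Z.sub_0_r. auto.
    - replace (a - Z.of_nat (S k))%Z with (a - Z.of_nat k - 1)%Z by lia.
      replace (a - Z.of_nat k - 1 + 1)%Z with (a - Z.of_nat k)%Z by lia. auto. }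
  intros n. destruct (Z_le_dec a n).
  - replace n with (a + Z.of_nat (Z.to_nat (n - a)))%Z by lia. apply Hf.
  - replace n with (a - Z.of_nat (Z.to_nat (a - n)))%Z by lia. apply Hb.
Qed.

Definition solves (q : Z -> R) (lam : R) (x : Z -> R) : Prop :=
  forall n, x (n - 1)%Z + q n * x n + x (n + 1)%Z = lam * x n.

Lemma solution_unique_continuation q lam x a :
  solves q lam x -> x a = 0 -> x (a + 1)%Z = 0 -> forall n, x n = 0.
Proof.
  intros Hs H0 H1. apply (two_sided_induction (fun n => x n = 0) a H0 H1); intros n Ha Hb.
  - pose proof (Hs n) as E. rewrite Ha, Hb in E. lra.
  - pose proof (Hs n) as E. rewrite Ha, Hb in E. lra.
Qed.

Lemma eigenvector_unique_continuation (d u : Z -> Cx) (lam : Cx) a :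
  (forall n, Jop d u n = Cmul lam (u n)) -> u a = C0 -> u (a + 1)%Z = C0 -> forall n, u n = C0.
Proof.
  intros Heig H0 H1. apply (two_sided_induction (fun n => u n = C0) a H0 H1); intros n Ha Hb;
    pose proof (Heig n) as E; unfold Jop in E; rewrite Ha, Hb in E;
    assert (E1 := f_equal Re E); assert (E2 := f_equal Im E);
    unfold Cadd, Cmul, C0, Re, Im in E1, E2; simpl in E1, E2; apply Cx_ext; unfold C0, Re, Im; simpl; lra.
Qed.

(** * Interior criterion for eigenvalues *)

(* The equation  a s + |s|^2 g = c  is solvable when |c| |g| is small compared to |a|^2,
   by the intermediate value theorem
   applied to  r |-> |a|^2 r^2 - |c - r^2 g|^2  on [0, sqrt (4 |c|^2 / |a|^2)]. *)
Lemma small_quadratic_solvable (a c g : Cx) : 0 < Cnorm2 a ->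
  16 * Cnorm2 c * Cnorm2 g <= Cnorm2 a * Cnorm2 a ->
  exists s, Cmul a s = Csub c (scale (Cnorm2 s) g).
Proof.
  intros HA Hsmall. set (A := Cnorm2 a) in *.
  pose proof (Cnorm2_nonneg c) as Hc. pose proof (Cnorm2_nonneg g) as Hg.
  set (h := fun r => A * r * r - Cnorm2 (Csub c (scale (r * r) g))).
  assert (Hcont : continuity h).
  { intros x. unfold h, Cnorm2, Csub, scale, Re, Im; simpl. reg. }
  set (R1 := 4 * Cnorm2 c / A).
  assert (HR1 : 0 <= R1) by (unfold R1; apply Rdiv_le_0_compat; lra).
  assert (Hh0 : h 0 <= 0).
  { unfold h. replace (Csub c (scale (0 * 0) g)) with c
      by (apply Cx_ext; unfold Csub, scale, Re, Im; simpl; ring). lra. }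
  assert (Hh1 : 0 <= h (sqrt R1)).
  { unfold h. rewrite Rmult_assoc, sqrt_sqrt by auto.
    pose proof (Cnorm2_sub_le c (scale R1 g)) as Hsub. rewrite Cnorm2_scale in Hsub.
    assert (A * R1 = 4 * Cnorm2 c) by (unfold R1; field; lra).
    assert (R1 * R1 * Cnorm2 g <= Cnorm2 c).
    { replace (R1 * R1 * Cnorm2 g) with (Cnorm2 c * (16 * Cnorm2 c * Cnorm2 g) / (A * A))
        by (unfold R1; field; lra).
      apply (Rmult_le_reg_r (A * A)); [nra|].
      replace (Cnorm2 c * (16 * Cnorm2 c * Cnorm2 g) / (A * A) * (A * A))
        with (Cnorm2 c * (16 * Cnorm2 c * Cnorm2 g)) by (field; lra). nra. }
    lra. }
  destruct (IVT_cor h 0 (sqrt R1) Hcont (sqrt_pos R1) ltac:(nra)) as [r [_ Hr]].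
  unfold h in Hr. set (qv := Csub c (scale (r * r) g)) in *.
  exists (scale (1 / A) (Cmul qv (Cconj a))).
  assert (Hs2 : Cnorm2 (scale (1 / A) (Cmul qv (Cconj a))) = r * r).
  { rewrite Cnorm2_scale, Cnorm2_mul, Cnorm2_conj. fold A.
    replace (Cnorm2 qv) with (A * r * r) by lra. field. lra. }
  rewrite Hs2. apply Cmul_div. auto.
Qed.

Definition cdelta (k : Z) (v : Cx) (n : Z) : Cx := if Z.eq_dec n k then v else C0.

Section TestVectors.
Variables (d u : Z -> Cx) (lam : Cx) (U : R) (m : Z).
Hypothesis Heig : forall n, Jop d u n = Cmul lam (u n).
Hypothesis HU : zsum_to (fun n => Cnorm2 (u n)) U.

Definition test_vector (al s : Cx) (ka : R) (n : Z) : Cx :=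
  scale ka (Cadd (Cmul al (u n)) (cdelta m s n)).

(* The squared norm of the test vector, up to the factor ka^2. *)
Definition weight (al s : Cx) : R :=
  Cnorm2 al * U + Cnorm2 (Cadd (Cmul al (u m)) s) - Cnorm2 al * Cnorm2 (u m).

Lemma test_vector_norm al s ka :
  zsum_to (fun n => Cnorm2 (test_vector al s ka n))
    (ka * ka * Cnorm2 al * U + (ka * ka * (Cnorm2 (Cadd (Cmul al (u m)) s)
       - Cnorm2 al * Cnorm2 (u m)) + 0 + 0)).
Proof.
  apply zsum_perturb3 with (g := fun n => Cnorm2 (u n)) (m1 := m) (m2 := m) (m3 := m); auto.
  intros n. unfold test_vector, zdelta, cdelta. destruct (Z.eq_dec n m) as [->|];
    unfold Cnorm2, scale, Cadd, Cmul, Re, Im, C0; simpl; ring.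
Qed.

(* The summand of <J w, w> is |u(n)|^2 times a constant, except at m-1, m, m+1. *)
Definition form_bulk al ka : Cx := scale (ka * ka * Cnorm2 al) lam.
Definition form_left al s ka : Cx :=
  scale (ka * ka) (Cmul (Cmul s (Cconj al)) (Cconj (u (m - 1)%Z))).
Definition form_mid al s ka : Cx :=
  scale (ka * ka) (Cadd (Cadd (Cmul (Cmul (Cmul al lam) (u m)) (Cconj s))
                     (Cmul (Cmul (Cmul s (d m)) (Cconj al)) (Cconj (u m))))
                     (Cmul (Cmul s (Cconj s)) (d m))).
Definition form_right al s ka : Cx :=
  scale (ka * ka) (Cmul (Cmul s (Cconj al)) (Cconj (u (m + 1)%Z))).

Lemma test_vector_form al s ka n :
  Cmul (Jop d (test_vector al s ka) n) (Cconj (test_vector al s ka n)) =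
  Cadd (scale (Cnorm2 (u n)) (form_bulk al ka))
    (Cadd (cdelta (m - 1) (form_left al s ka) n)
      (Cadd (cdelta m (form_mid al s ka) n) (cdelta (m + 1) (form_right al s ka) n))).
Proof.
  pose proof (Heig n) as E. unfold Jop in E.
  assert (E1 := f_equal Re E). assert (E2 := f_equal Im E).
  unfold Jop, test_vector, cdelta, form_bulk, form_left, form_mid, form_right.
  assert (Hcase : m = n \/ m = (n + 1)%Z \/ m = (n - 1)%Z \/
                  (m <> n /\ m <> (n + 1)%Z /\ m <> (n - 1)%Z)) by lia.
  destruct Hcase as [->|[->|[->|[N1 [N2 N3]]]]];
  rewrite ?Z.add_simpl_r, ?Z.sub_add;
  repeat match goal with |- context[Z.eq_dec ?a ?b] => destruct (Z.eq_dec a b); try lia end;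
  destruct (u (n + 1)%Z) as [c1 c2]; destruct (u n) as [b1 b2]; destruct (u (n - 1)%Z) as [a1 a2];
  unfold Re, Im, Cadd, Cmul, Cconj, scale, C0, Cnorm2 in *; simpl in *;
  unfold Re, Im in E1, E2;
  assert (c1 = fst lam * b1 - snd lam * b2 - a1 - (fst (d n) * b1 - snd (d n) * b2)) by lra; subst c1;
  assert (c2 = fst lam * b2 + snd lam * b1 - a2 - (fst (d n) * b2 + snd (d n) * b1)) by lra; subst c2;
  apply Cx_ext; unfold Re, Im; simpl; ring.
Qed.

Definition form_value al s ka : Cx :=
  (Re (form_bulk al ka) * U + (Re (form_left al s ka) + Re (form_mid al s ka) + Re (form_right al s ka)),
   Im (form_bulk al ka) * U + (Im (form_left al s ka) + Im (form_mid al s ka) + Im (form_right al s ka))).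

Lemma form_value_in_range al s ka : ka * ka * weight al s = 1 -> NumRange d (form_value al s ka).
Proof.
  intros HN. exists (test_vector al s ka). split; [|split].
  - pose proof (test_vector_norm al s ka) as W. unfold weight in HN.
    replace 1 with (ka * ka * Cnorm2 al * U + (ka * ka * (Cnorm2 (Cadd (Cmul al (u m)) s)
       - Cnorm2 al * Cnorm2 (u m)) + 0 + 0)) by (rewrite <- HN; ring). exact W.
  - apply zsum_perturb3 with (g := fun n => Cnorm2 (u n)) (m1 := (m - 1)%Z) (m2 := m) (m3 := (m + 1)%Z);
      auto.
    intros n. rewrite test_vector_form. unfold cdelta, zdelta.
    repeat destruct Z.eq_dec; unfold Cadd, scale, C0, Re; simpl; ring.
  - apply zsum_perturb3 with (g := fun n => Cnorm2 (u n)) (m1 := (m - 1)%Z) (m2 := m) (m3 := (m + 1)%Z);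
      auto.
    intros n. rewrite test_vector_form. unfold cdelta, zdelta.
    repeat destruct Z.eq_dec; unfold Cadd, scale, C0, Im; simpl; ring.
Qed.

(* The coefficient al = 1 - s conj(u(m)) / U, for which the form becomes affine in s. *)
Definition alpha (s : Cx) : Cx := Csub (1, 0) (scale (1 / U) (Cmul s (Cconj (u m)))).
Definition im_gap : Cx := (0, 2 * (Im (d m) - Im lam)).
Definition coef_lin : Cx := Cmul (Cconj (u m)) im_gap.
Definition coef_quad : Cx := Csub (Csub (d m) lam) (scale (Cnorm2 (u m) / U) im_gap).
Definition defect : R := 1 - Cnorm2 (u m) / U.

Lemma form_value_alpha s ka : U <> 0 ->
  form_value (alpha s) s ka =
  scale (ka * ka) (Cadd (scale (weight (alpha s) s) lam)
     (Cadd (Cmul coef_lin s) (scale (Cnorm2 s) coef_quad))).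
Proof.
  intros HU0. pose proof (Heig m) as E. unfold Jop in E.
  assert (E1 := f_equal Re E). assert (E2 := f_equal Im E).
  unfold form_value, form_bulk, form_left, form_mid, form_right, weight, alpha,
    coef_lin, coef_quad, im_gap.
  replace (m - 1 + 1)%Z with m in * by lia.
  destruct (u (m + 1)%Z) as [c1 c2]. destruct (u m) as [b1 b2]. destruct (u (m - 1)%Z) as [a1 a2].
  destruct (d m) as [d1 d2]. destruct lam as [l1 l2]. destruct s as [s1 s2].
  unfold Re, Im, Cadd, Csub, Cmul, Cconj, scale, C0, Cnorm2 in *; simpl in *.
  assert (c1 = l1 * b1 - l2 * b2 - a1 - (d1 * b1 - d2 * b2)) by lra; subst c1.
  assert (c2 = l1 * b2 + l2 * b1 - a2 - (d1 * b2 + d2 * b1)) by lra; subst c2.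
  apply Cx_ext; unfold Re, Im; simpl; field; auto.
Qed.

Lemma weight_alpha s : U <> 0 -> weight (alpha s) s = U + Cnorm2 s * defect.
Proof.
  intros HU0. unfold weight, alpha, defect. destruct (u m) as [p1 p2]; destruct s as [s1 s2].
  unfold Cnorm2, Cadd, Csub, Cmul, Cconj, scale, Re, Im; simpl. field; auto.
Qed.

Lemma defect_range : 0 < U -> 0 <= defect <= 1.
Proof.
  intros HU0. unfold defect.
  assert (Hp : Cnorm2 (u m) <= U) by (apply (zsum_term _ _ HU); intros; apply Cnorm2_nonneg).
  pose proof (Cnorm2_nonneg (u m)).
  assert (Cnorm2 (u m) / U <= 1).
  { apply (Rmult_le_reg_r U); auto. replace (Cnorm2 (u m) / U * U) with (Cnorm2 (u m)) by (field; lra). lra. }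
  assert (0 <= Cnorm2 (u m) / U) by (apply Rdiv_le_0_compat; lra). lra.
Qed.

Lemma coef_lin_nonzero : u m <> C0 -> Im (d m) <> Im lam -> 0 < Cnorm2 coef_lin.
Proof.
  intros Hum Hne. unfold coef_lin. rewrite Cnorm2_mul, Cnorm2_conj. apply Rmult_lt_0_compat.
  - apply Cnorm2_pos; auto.
  - assert (Hx : Im (d m) - Im lam <> 0) by lra. pose proof (Rsqr_pos_lt _ Hx).
    unfold Rsqr, Cnorm2, im_gap, Re, Im in *; simpl. nra.
Qed.

Lemma numrange_point s : 0 < U ->
  NumRange d (Cadd lam (scale (1 / (U + Cnorm2 s * defect))
                          (Cadd (Cmul coef_lin s) (scale (Cnorm2 s) coef_quad)))).
Proof.
  intros HU0. pose proof (defect_range HU0). pose proof (Cnorm2_nonneg s).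
  set (N := U + Cnorm2 s * defect).
  assert (HN : weight (alpha s) s = N) by (apply weight_alpha; lra).
  assert (HNp : 0 < N) by (unfold N; nra).
  set (ka := 1 / sqrt N).
  assert (Hka : ka * ka = 1 / N).
  { unfold ka. pose proof (sqrt_lt_R0 N HNp).
    replace (1 / sqrt N * (1 / sqrt N)) with (1 / (sqrt N * sqrt N)) by (field; lra).
    rewrite sqrt_sqrt; lra. }
  pose proof (form_value_in_range (alpha s) s ka ltac:(rewrite HN, Hka; field; lra)) as Hnum.
  rewrite (form_value_alpha s ka ltac:(lra)), HN, Hka in Hnum.
  destruct lam as [l1 l2]. destruct (Cadd (Cmul coef_lin s) (scale (Cnorm2 s) coef_quad)) as [e1 e2].
  replace (Cadd (l1, l2) (scale (1 / N) (e1, e2))) with (scale (1 / N) (Cadd (scale N (l1, l2)) (e1, e2)));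
    auto.
  apply Cx_ext; unfold scale, Cadd, Re, Im; simpl; field; lra.
Qed.
End TestVectors.

Lemma eigenvalue_interior (d u : Z -> Cx) (lam : Cx) (U : R) (m : Z)
  (Heig : forall n, Jop d u n = Cmul lam (u n))
  (HU : zsum_to (fun n => Cnorm2 (u n)) U) (HUp : 0 < U)
  (Hum : u m <> C0) (Hne : Im (d m) <> Im lam) : in_interior (NumRange d) lam.
Proof.
  set (a := coef_lin d u lam m). set (A := Cnorm2 a).
  assert (HA : 0 < A) by exact (coef_lin_nonzero d u lam m Hum Hne).
  set (b := coef_quad d u lam U m).
  set (V := defect u U m). pose proof (defect_range u U m HU HUp) as HV. fold V in HV.
  pose proof (Cnorm2_nonneg b) as HB2.
  set (K := 32 * U * U * (Cnorm2 b + 1) + 1). assert (HK : 0 < K) by (unfold K; nra).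
  set (mu := Rmin 1 (A * A / K)).
  assert (Hmu : 0 < mu) by (unfold mu; apply Rmin_pos; [lra|apply Rdiv_lt_0_compat; nra]).
  exists (sqrt mu). split; [apply sqrt_lt_R0; auto|].
  intros w Hw. set (ze := Csub w lam) in *.
  assert (HZ : Cnorm2 ze < mu).
  { unfold Cmod in Hw. rewrite <- (sqrt_sqrt mu) in Hw by lra. apply sqrt_lt_0_alt in Hw.
    rewrite sqrt_sqrt in Hw by lra. auto. }
  assert (HZ1 : Cnorm2 ze < 1) by (pose proof (Rmin_l 1 (A * A / K)); fold mu in H; lra).
  assert (HZK : Cnorm2 ze * K <= A * A).
  { pose proof (Rmin_r 1 (A * A / K)) as Hm; fold mu in Hm.
    replace (A * A) with (A * A / K * K) by (field; lra). apply Rmult_le_compat_r; lra. }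
  (* w - lam = (a s + |s|^2 b) / (U + |s|^2 V)  amounts to  a s = U ze - |s|^2 (b - V ze). *)
  assert (Hsmall : 16 * Cnorm2 (scale U ze) * Cnorm2 (Csub b (scale V ze)) <= A * A).
  { rewrite Cnorm2_scale. pose proof (Cnorm2_nonneg ze).
    pose proof (Cnorm2_sub_le b (scale V ze)) as Hg. rewrite Cnorm2_scale in Hg.
    assert (V * V <= 1) by nra.
    assert (HG : Cnorm2 (Csub b (scale V ze)) <= 2 * Cnorm2 b + 2) by nra.
    assert (0 <= U * U * Cnorm2 ze) by nra.
    assert (16 * (U * U * Cnorm2 ze) * Cnorm2 (Csub b (scale V ze))
            <= 16 * (U * U * Cnorm2 ze) * (2 * Cnorm2 b + 2)) by (apply Rmult_le_compat_l; lra).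
    unfold K in HZK. nra. }
  destruct (small_quadratic_solvable a (scale U ze) (Csub b (scale V ze)) HA Hsmall) as [s Hs].
  pose proof (numrange_point d u lam U m Heig HU s HUp) as Hnum. fold a b V in Hnum.
  replace w with (Cadd lam (scale (1 / (U + Cnorm2 s * V)) (Cadd (Cmul a s) (scale (Cnorm2 s) b))));
    auto.
  pose proof (Cnorm2_nonneg s). assert (0 < U + Cnorm2 s * V) by nra.
  rewrite Hs. unfold ze in *. destruct w as [w1 w2]. destruct lam as [l1 l2]. destruct b as [e1 e2].
  apply Cx_ext; unfold scale, Cadd, Csub, Re, Im; simpl; field; lra.
Qed.

(** * Decaying real solutions with infinitely many zeros *)

Definition tends_to_zero_right (x : Z -> R) : Prop :=
  forall eps, 0 < eps -> exists N : Z, forall n, (N <= n)%Z -> Rabs (x n) < eps.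

Definition moment_tails_small (q : Z -> R) : Prop :=
  forall eps, 0 < eps -> exists K : nat, forall k, (K <= k)%nat -> forall j,
    ssum (fun i => INR (k + i) * Rabs (q (Z.of_nat (k + i)))) j < eps.

Definition zeros_cofinal_right (x : Z -> R) : Prop :=
  forall N : Z, exists n, (N <= n)%Z /\ x n = 0.

Lemma alternate_sign_solution q lam x :
  solves q lam x ->
  solves (fun n => - q n) (- lam) (fun n => if Z.even n then x n else - x n).
Proof.
  intros Hs n. specialize (Hs n). rewrite Z.even_sub, Z.even_add. simpl.
  destruct (Z.even n); simpl; lra.
Qed.

(* For lam = 2, a solution starting from a zero with positive slope stays above its
   first nonzero value, provided the first moment of the potential is below 1/4:
   the increments y(k+1) - y(k) = c - sum_{i<k} g(i) y(i+1) stay positive. *)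
Lemma stays_above_after_zero (y g : nat -> R) (c : R) :
  y 0%nat = 0 -> y 1%nat = c -> 0 < c ->
  (forall k, y (S (S k)) = 2 * y (S k) - y k - g k * y (S k)) ->
  (forall j, ssum (fun i => INR (S i) * Rabs (g i)) j < 1 / 4) ->
  forall k, y (S k) >= c.
Proof.
  intros Hy0 Hy1 Hc Hrec HM.
  set (W := fun k => ssum (fun i => g i * y (S i)) k).
  set (M := fun k => ssum (fun i => INR (S i) * Rabs (g i)) k).
  assert (Hincr : forall k, y (S k) - y k = c - W k).
  { induction k.
    - rewrite Hy0, Hy1. unfold W; cbn [ssum]. lra.
    - rewrite Hrec. unfold W in *; cbn [ssum]. lra. }
  assert (HMn : forall k, 0 <= M k).
  { intros; apply ssum_nonneg; intros; apply Rmult_le_pos; [apply pos_INR|apply Rabs_pos]. }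
  (* A priori bounds: 0 <= y(k) <= 2 c k and |W(k)| <= 2 c M(k) < c / 2. *)
  assert (Hbound : forall k, 0 <= y k <= 2 * c * INR k /\ Rabs (W k) <= 2 * c * M k).
  { induction k as [|k [[IH1 IH2] IH3]].
    - rewrite Hy0. unfold W, M; cbn [ssum]. rewrite Rabs_R0. simpl INR. lra.
    - pose proof (Hincr k). pose proof (HM k). pose proof (HMn k). fold (M k) in H0.
      assert (Hw : Rabs (W k) < c / 2) by nra. apply Rabs_def2 in Hw.
      assert (Hys : 0 <= y (S k) <= 2 * c * INR (S k)) by (rewrite S_INR; lra).
      split; auto.
      unfold W, M; cbn [ssum]. fold (W k) (M k).
      eapply Rle_trans; [apply Rabs_triang|]. rewrite Rabs_mult, (Rabs_pos_eq (y (S k))) by lra.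
      pose proof (Rabs_pos (g k)). nra. }
  intros k. induction k.
  - rewrite Hy1; lra.
  - pose proof (Hincr (S k)). destruct (Hbound (S k)) as [_ Hw].
    assert (HMk : M (S k) < 1 / 4) by apply HM.
    assert (2 * c * M (S k) < c / 2) by nra.
    pose proof (Rle_abs (W (S k))). lra.
Qed.

Definition energy (x : Z -> R) (lam : R) (n : Z) : R :=
  x n * x n + x (n + 1)%Z * x (n + 1)%Z - lam * x n * x (n + 1)%Z.

Section OneSided.
Variables (x q : Z -> R) (lam : R).
Hypothesis Hsol : solves q lam x.
Hypothesis Hx0 : tends_to_zero_right x.
Hypothesis Hm : moment_tails_small q.
Hypothesis Hz : zeros_cofinal_right x.
Hypothesis Hnz : exists n, x n <> 0.

Lemma nonzero_after_zero n : x n = 0 -> x (n + 1)%Z <> 0.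
Proof.
  intros H H'. destruct Hnz as [m Hm']. apply Hm'.
  exact (solution_unique_continuation q lam x n Hsol H H' m).
Qed.

Lemma potential_tends_to_zero : tends_to_zero_right q.
Proof.
  intros eps he. destruct (Hm eps he) as [K HK]. exists (Z.of_nat (S K)). intros n Hn.
  specialize (HK (Z.to_nat n) ltac:(lia) 1%nat). simpl in HK.
  rewrite Nat.add_0_r, Z2Nat.id in HK by lia.
  assert (1 <= INR (Z.to_nat n)) by (replace 1 with (INR 1) by reflexivity; apply le_INR; lia).
  pose proof (Rabs_pos (q n)). nra.
Qed.

(* |lam| > 2: after a zero, |x| is nondecreasing since |lam - q(n)| >= 2 eventually. *)
Lemma no_solution_large_lam : 2 < Rabs lam -> False.
Proof.
  intros Hl. destruct (potential_tends_to_zero (Rabs lam - 2) ltac:(lra)) as [N HN].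
  destruct (Hz N) as [n0 [Hn0 Hx]].
  pose proof (nonzero_after_zero n0 Hx) as Hc.
  assert (Hgrow : forall k : nat,
     Rabs (x (n0 + 1)%Z) <= Rabs (x (n0 + Z.of_nat k + 1)%Z) /\
     Rabs (x (n0 + Z.of_nat k)%Z) <= Rabs (x (n0 + Z.of_nat k + 1)%Z)).
  { induction k as [|k [IH1 IH2]].
    - rewrite Z.add_0_r, Hx, Rabs_R0. split; [lra|apply Rabs_pos].
    - replace (n0 + Z.of_nat (S k))%Z with (n0 + Z.of_nat k + 1)%Z by lia.
      set (m := (n0 + Z.of_nat k + 1)%Z) in *.
      pose proof (Hsol m) as E. replace (m - 1)%Z with (n0 + Z.of_nat k)%Z in E by (unfold m; lia).
      assert (Eq : x (m + 1)%Z = (lam - q m) * x m - x (n0 + Z.of_nat k)%Z) by lra.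
      assert (Hq : Rabs (q m) < Rabs lam - 2) by (apply HN; unfold m; lia).
      assert (H1 : Rabs (x (m + 1)%Z) >= Rabs ((lam - q m) * x m) - Rabs (x (n0 + Z.of_nat k)%Z)).
      { rewrite Eq. pose proof (Rabs_triang_inv ((lam - q m) * x m) (x (n0 + Z.of_nat k)%Z)). lra. }
      rewrite Rabs_mult in H1.
      assert (H2 : Rabs (lam - q m) >= 2) by (pose proof (Rabs_triang_inv lam (q m)); lra).
      pose proof (Rabs_pos (x m)). split; nra. }
  destruct (Hx0 (Rabs (x (n0 + 1)%Z)) ltac:(apply Rabs_pos_lt; auto)) as [N1 HN1].
  destruct (Hgrow (Z.to_nat (Z.abs N1 + Z.abs n0))) as [Hg _].
  specialize (HN1 (n0 + Z.of_nat (Z.to_nat (Z.abs N1 + Z.abs n0)) + 1)%Z ltac:(lia)). lra.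
Qed.

(* lam = 2: start at a zero far out, where the first moment of q is below 1/4. *)
Lemma no_solution_lam_two : lam = 2 -> False.
Proof.
  intros Hl2. assert (Hsol2 : solves q 2 x) by (rewrite <- Hl2; exact Hsol).
  destruct (Hm (1 / 4) ltac:(lra)) as [K HK].
  destruct (Hz (Z.of_nat K)) as [n0 [Hn0 Hx]].
  set (k0 := Z.to_nat n0). assert (Hk0 : n0 = Z.of_nat k0) by (unfold k0; lia).
  rewrite Hk0 in Hx. pose proof (nonzero_after_zero _ Hx) as Hc.
  set (c := x (Z.of_nat k0 + 1)%Z) in *.
  set (g := fun i => q (Z.of_nat (k0 + 1 + i))).
  assert (Hg : forall j, ssum (fun i => INR (S i) * Rabs (g i)) j < 1 / 4).
  { intros j. eapply Rle_lt_trans; [|apply (HK (k0 + 1)%nat ltac:(lia) j)].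
    apply ssum_le. intros i. unfold g. pose proof (Rabs_pos (q (Z.of_nat (k0 + 1 + i)))).
    assert (INR (S i) <= INR (k0 + 1 + i)) by (apply le_INR; lia). nra. }
  (* Apply [stays_above_after_zero] to  sgn(c) x(k0 + k). *)
  set (sg := if Rlt_le_dec 0 c then 1 else -1).
  assert (Hsg : 0 < sg * c /\ sg * sg = 1).
  { unfold sg. destruct (Rlt_le_dec 0 c); [lra|]. split; [|lra]. assert (c <> 0) by auto. lra. }
  assert (Habove := stays_above_after_zero (fun k => sg * x (Z.of_nat (k0 + k))) g (sg * c)).
  destruct (Hx0 (sg * c) ltac:(lra)) as [N HN].
  set (k := Z.to_nat (Z.abs N)).
  specialize (HN (Z.of_nat (k0 + S k)) ltac:(unfold k; lia)).
  specialize (Habove ltac:(cbv beta; rewrite Nat.add_0_r, Hx; ring)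
                     ltac:(cbv beta; unfold c; do 3 f_equal; lia) ltac:(lra)).
  assert (Hrec : forall k, sg * x (Z.of_nat (k0 + S (S k))) =
            2 * (sg * x (Z.of_nat (k0 + S k))) - sg * x (Z.of_nat (k0 + k)) - g k * (sg * x (Z.of_nat (k0 + S k)))).
  { intros i. unfold g. pose proof (Hsol2 (Z.of_nat (k0 + S i))) as E.
    replace (Z.of_nat (k0 + S i) - 1)%Z with (Z.of_nat (k0 + i)) in E by lia.
    replace (Z.of_nat (k0 + S i) + 1)%Z with (Z.of_nat (k0 + S (S i))) in E by lia.
    replace (k0 + 1 + i)%nat with (k0 + S i)%nat by lia.
    replace (x (Z.of_nat (k0 + S (S i)))) with
      (2 * x (Z.of_nat (k0 + S i)) - x (Z.of_nat (k0 + i)) - q (Z.of_nat (k0 + S i)) * x (Z.of_nat (k0 + S i)))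
      by lra. ring. }
  specialize (Habove Hrec Hg k). cbv beta in Habove.
  assert (Rabs (sg * x (Z.of_nat (k0 + S k))) = Rabs (x (Z.of_nat (k0 + S k)))).
  { rewrite Rabs_mult. replace (Rabs sg) with 1; [ring|].
    unfold sg; destruct Rlt_le_dec; unfold Rabs; destruct Rcase_abs; lra. }
  pose proof (Rle_abs (sg * x (Z.of_nat (k0 + S k)))). lra.
Qed.

(* |lam| < 2: the energy is comparable to x(n)^2 + x(n+1)^2 and changes by a factor
   1 - O(|q(n)|) at each step; as sum |q| < oo it stays bounded below, contradicting x -> 0. *)
Section SmallLam.
Hypothesis Hl : Rabs lam < 2.

Lemma energy_lower n :
  energy x lam n >= (1 - Rabs lam / 2) * (x n * x n + x (n + 1)%Z * x (n + 1)%Z).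
Proof.
  unfold energy. set (a := x n). set (b := x (n + 1)%Z).
  assert (Rabs (lam * a * b) <= Rabs lam * (a * a + b * b) / 2).
  { rewrite !Rabs_mult. pose proof (Rabs_pos lam).
    assert (Rabs a * Rabs b <= (a * a + b * b) / 2).
    { pose proof (Rle_0_sqr (Rabs a - Rabs b)).
      assert (Rabs a * Rabs a = a * a) by (rewrite <- Rabs_mult; apply Rabs_pos_eq; nra).
      assert (Rabs b * Rabs b = b * b) by (rewrite <- Rabs_mult; apply Rabs_pos_eq; nra).
      unfold Rsqr in *; nra. }
    nra. }
  pose proof (Rle_abs (lam * a * b)). nra.
Qed.

Lemma energy_upper n : energy x lam n <= 2 * (x n * x n + x (n + 1)%Z * x (n + 1)%Z).
Proof.
  unfold energy. set (a := x n). set (b := x (n + 1)%Z).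
  assert (-2 < lam < 2) by (apply Rabs_def2 in Hl; lra).
  pose proof (Rle_0_sqr (a - b)). pose proof (Rle_0_sqr (a + b)). unfold Rsqr in *. nra.
Qed.

Lemma energy_nonneg n : 0 <= energy x lam n.
Proof.
  pose proof (energy_lower n).
  assert (0 <= (1 - Rabs lam / 2) * (x n * x n + x (n + 1)%Z * x (n + 1)%Z))
    by (apply Rmult_le_pos; nra). lra.
Qed.

Lemma energy_pos n : 0 < energy x lam n.
Proof.
  pose proof (energy_lower n).
  assert (0 < x n * x n + x (n + 1)%Z * x (n + 1)%Z).
  { destruct (Req_dec (x n) 0) as [H0|H0].
    - pose proof (Rsqr_pos_lt _ (nonzero_after_zero n H0)). unfold Rsqr in *. nra.
    - pose proof (Rsqr_pos_lt _ H0). pose proof (Rle_0_sqr (x (n + 1)%Z)). unfold Rsqr in *. nra. }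
  assert (0 < (1 - Rabs lam / 2) * (x n * x n + x (n + 1)%Z * x (n + 1)%Z))
    by (apply Rmult_lt_0_compat; lra). lra.
Qed.

Lemma energy_step n : Rabs (q n) <= 1 ->
  energy x lam n >= energy x lam (n - 1)%Z * (1 - 8 / (2 - Rabs lam) * Rabs (q n)).
Proof.
  intros Hq. pose proof (energy_nonneg (n - 1)) as HF0. pose proof (energy_lower (n - 1)) as HL.
  pose proof (Hsol n) as En. unfold energy in *. replace (n - 1 + 1)%Z with n in * by lia.
  set (a := x (n - 1)%Z) in *. set (b := x n) in *. set (c := x (n + 1)%Z) in *. set (t := q n) in *.
  set (F := a * a + b * b - lam * a * b) in *.
  assert (Hid : b * b + c * c - lam * b * c = F + t * (b * (2 * a - lam * b)) + t * t * b * b).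
  { replace c with (lam * b - a - t * b) by lra. unfold F. ring. }
  rewrite Hid.
  assert (Hy : Rabs (b * (2 * a - lam * b)) <= 3 * (a * a + b * b)).
  { apply Rabs_le. assert (-2 < lam < 2) by (apply Rabs_def2 in Hl; lra).
    pose proof (Rle_0_sqr (a - b)). pose proof (Rle_0_sqr (a + b)). pose proof (Rle_0_sqr b).
    unfold Rsqr in *. split; nra. }
  assert (Ht : t * (b * (2 * a - lam * b)) >= - Rabs t * (3 * (a * a + b * b))).
  { pose proof (Rabs_pos t). pose proof (Rle_abs (- (t * (b * (2 * a - lam * b))))) as Ha.
    rewrite Rabs_Ropp, Rabs_mult in Ha. nra. }
  assert (HF : a * a + b * b <= F * (2 / (2 - Rabs lam))).
  { apply (Rmult_le_reg_r ((2 - Rabs lam) / 2)); [apply Rdiv_lt_0_compat; lra|].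
    replace (F * (2 / (2 - Rabs lam)) * ((2 - Rabs lam) / 2)) with F by (field; lra). lra. }
  assert (Hr : 8 / (2 - Rabs lam) * Rabs t * F = 4 * Rabs t * (F * (2 / (2 - Rabs lam))))
    by (field; lra).
  pose proof (Rabs_pos t).
  assert (Rabs t * (a * a + b * b) <= Rabs t * (F * (2 / (2 - Rabs lam))))
    by (apply Rmult_le_compat_l; lra).
  assert (0 <= t * t * b * b) by nra.
  nra.
Qed.

Lemma energy_persists n0 :
  (forall j, 8 / (2 - Rabs lam) * ssum (fun i => Rabs (q (n0 + 1 + Z.of_nat i)%Z)) j <= 1 / 2) ->
  forall j, energy x lam (n0 + Z.of_nat j)%Z >=
            energy x lam n0 * (1 - 8 / (2 - Rabs lam) * ssum (fun i => Rabs (q (n0 + 1 + Z.of_nat i)%Z)) j).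
Proof.
  intros HCS.
  assert (HC : 4 <= 8 / (2 - Rabs lam)).
  { pose proof (Rabs_pos lam). apply (Rmult_le_reg_r (2 - Rabs lam)); [lra|].
    replace (8 / (2 - Rabs lam) * (2 - Rabs lam)) with 8 by (field; lra). lra. }
  set (C := 8 / (2 - Rabs lam)) in *.
  set (Sq := ssum (fun i => Rabs (q (n0 + 1 + Z.of_nat i)%Z))) in *.
  assert (HSn : forall j, 0 <= Sq j) by (intros; apply ssum_nonneg; intros; apply Rabs_pos).
  pose proof (energy_nonneg n0) as HE0.
  induction j.
  - unfold Sq; cbn [ssum]. rewrite Z.add_0_r. lra.
  - set (n := (n0 + Z.of_nat (S j))%Z).
    assert (HSS : Sq (S j) = Sq j + Rabs (q n)).
    { unfold Sq, n; cbn [ssum]. do 3 f_equal. lia. }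
    pose proof (HCS (S j)) as HCj. rewrite HSS in HCj. pose proof (HSn j).
    pose proof (Rabs_pos (q n)).
    assert (Hq1 : Rabs (q n) <= 1) by nra.
    pose proof (energy_step n Hq1) as St. fold C in St.
    replace (n - 1)%Z with (n0 + Z.of_nat j)%Z in St by (unfold n; lia).
    rewrite HSS.
    assert (energy x lam (n0 + Z.of_nat j)%Z * (1 - C * Rabs (q n))
            >= energy x lam n0 * (1 - C * Sq j) * (1 - C * Rabs (q n)))
      by (apply Rle_ge, Rmult_le_compat_r; nra).
    assert (0 <= energy x lam n0 * (C * Sq j * (C * Rabs (q n))))
      by (apply Rmult_le_pos; auto; apply Rmult_le_pos; nra).
    nra.
Qed.

Lemma no_solution_small_lam : False.
Proof.
  assert (HC : 0 < 8 / (2 - Rabs lam)) by (apply Rdiv_lt_0_compat; lra).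
  set (C := 8 / (2 - Rabs lam)) in *.
  destruct (Hm (1 / (2 * C)) ltac:(apply Rdiv_lt_0_compat; lra)) as [K HK].
  set (n0 := Z.of_nat K).
  assert (HCS : forall j, C * ssum (fun i => Rabs (q (n0 + 1 + Z.of_nat i)%Z)) j <= 1 / 2).
  { intros j. replace (1 / 2) with (C * (1 / (2 * C))) by (field; lra).
    apply Rmult_le_compat_l; [lra|]. apply Rlt_le.
    eapply Rle_lt_trans; [|apply (HK (S K) ltac:(lia) j)]. apply ssum_le. intros i.
    replace (n0 + 1 + Z.of_nat i)%Z with (Z.of_nat (S K + i)) by (unfold n0; lia).
    assert (1 <= INR (S K + i)) by (replace 1 with (INR 1) by reflexivity; apply le_INR; lia).
    pose proof (Rabs_pos (q (Z.of_nat (S K + i)))). nra. }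
  pose proof (energy_persists n0 HCS) as Hpers. fold C in Hpers.
  pose proof (energy_pos n0) as HE0.
  set (e := Rmin 1 (energy x lam n0 / 8)).
  assert (He : 0 < e) by (unfold e; apply Rmin_pos; lra).
  assert (He1 : e <= 1) by apply Rmin_l. assert (He2 : e <= energy x lam n0 / 8) by apply Rmin_r.
  destruct (Hx0 e He) as [N HN].
  set (j := Z.to_nat (Z.abs N + Z.abs n0)). set (n := (n0 + Z.of_nat j)%Z).
  pose proof (Rsqr_lt_abs _ _ (HN n ltac:(unfold n, j; lia))).
  pose proof (Rsqr_lt_abs _ _ (HN (n + 1)%Z ltac:(unfold n, j; lia))).
  pose proof (energy_upper n). pose proof (Hpers j). fold n in H2. pose proof (HCS j).
  assert (energy x lam n0 * (1 - C * ssum (fun i => Rabs (q (n0 + 1 + Z.of_nat i)%Z)) j)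
          >= energy x lam n0 / 2) by nra.
  nra.
Qed.
End SmallLam.
End OneSided.

Lemma no_decaying_solution_right q lam x :
  solves q lam x -> tends_to_zero_right x -> moment_tails_small q ->
  zeros_cofinal_right x -> (exists n, x n <> 0) -> False.
Proof.
  intros Hs Hx0 Hm Hz Hnz.
  destruct (Rlt_le_dec (Rabs lam) 2) as [H1|H1].
  { exact (no_solution_small_lam x q lam Hs Hx0 Hm Hnz H1). }
  destruct (Rle_lt_dec (Rabs lam) 2) as [H2|H2].
  2: { exact (no_solution_large_lam x q lam Hs Hx0 Hm Hz Hnz H2). }
  destruct (Rle_lt_dec 0 lam) as [Hp|Hn].
  - apply (no_solution_lam_two x q lam Hs Hx0 Hm Hz Hnz). rewrite Rabs_pos_eq in H1, H2 by lra; lra.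
  - set (x' := fun n => if Z.even n then x n else - x n).
    assert (Hab : forall n, Rabs (x' n) = Rabs (x n)).
    { intros n; unfold x'; destruct (Z.even n); rewrite ?Rabs_Ropp; auto. }
    apply (no_solution_lam_two x' (fun n => - q n) (- lam)).
    + apply alternate_sign_solution; auto.
    + intros eps he. destruct (Hx0 eps he) as [N HN]. exists N; intros; rewrite Hab; auto.
    + intros eps he. destruct (Hm eps he) as [K HK]. exists K. intros k Hk j.
      rewrite (ssum_ext _ (fun i => INR (k + i) * Rabs (q (Z.of_nat (k + i))))) by
        (intros; rewrite Rabs_Ropp; auto). auto.
    + intros N. destruct (Hz N) as [n [Hn1 Hn2]]. exists n; split; auto.
      unfold x'; rewrite Hn2; destruct Z.even; lra.
    + destruct Hnz as [n Hn']. exists n. unfold x'; destruct Z.even; auto. intros Hc; apply Hn'; lra.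
    + rewrite Rabs_left in H1, H2 by lra; lra.
Qed.

(* Reflecting Z reduces zeros tending to -oo to zeros tending to +oo. *)
Lemma no_decaying_solution q lam x :
  solves q lam x ->
  (forall eps, 0 < eps -> exists N : Z, forall n, (N <= Z.abs n)%Z -> Rabs (x n) < eps) ->
  moment_tails_small q -> moment_tails_small (fun n => q (- n)%Z) ->
  (forall N : Z, exists n, (N <= Z.abs n)%Z /\ x n = 0) ->
  (exists n, x n <> 0) -> False.
Proof.
  intros Hs Hx0 HmP HmN Hz Hnz.
  destruct (classic (zeros_cofinal_right x)) as [HP|HP].
  - apply (no_decaying_solution_right q lam x Hs); auto.
    intros eps he. destruct (Hx0 eps he) as [N HN]. exists (Z.abs N). intros n Hn. apply HN. lia.
  - apply not_all_ex_not in HP. destruct HP as [N0 HN0].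
    assert (HN0' : forall n, (N0 <= n)%Z -> x n <> 0) by (intros n Hn Hx; apply HN0; exists n; auto).
    apply (no_decaying_solution_right (fun n => q (- n)%Z) lam (fun n => x (- n)%Z)); auto.
    + intros n. pose proof (Hs (- n)%Z) as E.
      replace (- (n - 1))%Z with (- n + 1)%Z by lia. replace (- (n + 1))%Z with (- n - 1)%Z by lia. lra.
    + intros eps he. destruct (Hx0 eps he) as [N HN]. exists (Z.abs N). intros n Hn. apply HN. lia.
    + intros N. destruct (Hz (Z.max N (Z.max N0 0))) as [n [Hn Hx]].
      assert (n < 0)%Z by (destruct (Z_lt_le_dec n 0); auto; exfalso; apply (HN0' n); auto; lia).
      exists (- n)%Z. split; [lia|]. rewrite Z.opp_involutive. auto.
    + destruct Hnz as [n Hn]. exists (- n)%Z. rewrite Z.opp_involutive. auto.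
Qed.

Lemma zsum_terms_tend_to_zero f s : zsum_to f s -> (forall n, 0 <= f n) ->
  forall eps, 0 < eps -> exists N : Z, forall n, (N <= Z.abs n)%Z -> f n < eps.
Proof.
  intros Hs Hf eps he. destruct (zsum_tail f s Hs Hf eps he) as [K HK]. exists (Z.of_nat (S K)).
  intros n Hn. pose proof (Hf (- n - 1)%Z). destruct (Z_le_dec 0 n).
  - specialize (HK (Z.to_nat n) ltac:(lia) 1%nat). cbn [ssum] in HK. unfold pairf in HK.
    rewrite Nat.add_0_r, Z2Nat.id in HK by lia. lra.
  - specialize (HK (Z.to_nat (- n - 1)) ltac:(lia) 1%nat). cbn [ssum] in HK. unfold pairf in HK.
    rewrite Nat.add_0_r, Z2Nat.id in HK by lia. replace (- (- n - 1) - 1)%Z with n in HK by lia. lra.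
Qed.

Lemma moment_tails_of_sum q s :
  zsum_to (fun k => IZR (Z.abs k) * Rabs (q k)) s ->
  moment_tails_small q /\ moment_tails_small (fun n => q (- n)%Z).
Proof.
  intros Hs. set (f := fun k => IZR (Z.abs k) * Rabs (q k)) in *.
  assert (Hf : forall n, 0 <= f n) by (intros; unfold f; apply Rmult_le_pos; [apply IZR_le; lia|apply Rabs_pos]).
  split.
  - intros eps he. destruct (zsum_tail f s Hs Hf eps he) as [K HK]. exists K. intros k Hk j.
    eapply Rle_lt_trans; [|apply (HK k Hk j)]. apply ssum_le. intros i.
    unfold pairf. pose proof (Hf (- Z.of_nat (k + i) - 1)%Z).
    unfold f at 1. rewrite Z.abs_eq by lia. rewrite <- INR_IZR_INZ. lra.
  - intros eps he. destruct (zsum_tail f s Hs Hf eps he) as [K HK]. exists (S K). intros k Hk j.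
    eapply Rle_lt_trans; [|apply (HK (k - 1)%nat ltac:(lia) j)]. apply ssum_le. intros i.
    unfold pairf. pose proof (Hf (Z.of_nat (k - 1 + i))).
    replace (- Z.of_nat (k - 1 + i) - 1)%Z with (- Z.of_nat (k + i))%Z by lia.
    unfold f at 2. rewrite Z.abs_neq by lia. rewrite Z.opp_involutive, <- INR_IZR_INZ. lra.
Qed.

Lemma dominated_solution_vanishes q lam x f s :
  solves q lam x -> moment_tails_small q -> moment_tails_small (fun n => q (- n)%Z) ->
  zsum_to f s -> (forall n, x n * x n <= f n) ->
  (forall N : Z, exists n, (N <= Z.abs n)%Z /\ f n = 0) -> forall n, x n = 0.
Proof.
  intros Hs HmP HmN Hf Hdom Hz n. apply NNPP. intros Hxn.
  assert (Hfn : forall n, 0 <= f n) by (intros m; pose proof (Hdom m); nra).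
  apply (no_decaying_solution q lam x Hs); eauto.
  - intros e he. destruct (zsum_terms_tend_to_zero f s Hf Hfn (e * e) ltac:(nra)) as [N HN].
    exists N. intros m Hm. apply Rabs_lt_sqr; auto. pose proof (HN m Hm). pose proof (Hdom m). lra.
  - intros N. destruct (Hz N) as [m [Hm Hfm]]. exists m. split; auto.
    pose proof (Hdom m). nra.
Qed.

(** * Eigenvectors of J *)

Lemma eigenvalue_support_real (d u : Z -> Cx) (lam : Cx) :
  (forall n, Jop d u n = Cmul lam (u n)) -> (exists n, u n <> C0) ->
  (forall eps, 0 < eps -> exists N : Z, forall n : Z, (N <= Z.abs n)%Z -> Cmod (d n) < eps) ->
  (forall m, u m <> C0 -> Im (d m) = Im lam) -> Im lam = 0.
Proof.
  intros Heig [n1 Hn1] Hdecay Hsupp. apply NNPP. intros Hl0.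
  destruct (Hdecay (Rabs (Im lam)) ltac:(apply Rabs_pos_lt; auto)) as [N HN].
  assert (Hfar : forall m, (Z.abs N <= m)%Z -> u m <> C0 -> False).
  { intros m Hm Hum. pose proof (HN m ltac:(lia)). pose proof (abs_Im_le_Cmod (d m)).
    rewrite (Hsupp m Hum) in *. lra. }
  apply Hn1. apply (eigenvector_unique_continuation d u lam (Z.abs N) Heig).
  - apply NNPP. intros H. apply (Hfar (Z.abs N)); auto. lia.
  - apply NNPP. intros H. apply (Hfar (Z.abs N + 1)%Z); auto. lia.
Qed.

Lemma real_eigenvalue_components (d u : Z -> Cx) (lam : Cx) :
  (forall n, Jop d u n = Cmul lam (u n)) -> Im lam = 0 ->
  (forall n, u n <> C0 -> Im (d n) = 0) ->
  solves (fun n => Re (d n)) (Re lam) (fun n => Re (u n)) /\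
  solves (fun n => Re (d n)) (Re lam) (fun n => Im (u n)).
Proof.
  intros Heig Hl0 Hsupp.
  assert (HE : forall n, Im (d n) * Re (u n) = 0 /\ Im (d n) * Im (u n) = 0).
  { intros n. destruct (classic (u n = C0)) as [Hu|Hu].
    - rewrite Hu. unfold C0, Re, Im; simpl; split; ring.
    - rewrite (Hsupp n Hu). split; ring. }
  split; intros n; destruct (HE n) as [E1 E2]; pose proof (Heig n) as E;
    [apply (f_equal Re) in E|apply (f_equal Im) in E];
    unfold Jop, Cadd, Cmul, Re, Im in *; simpl in *; rewrite Hl0 in E; lra.
Qed.

Theorem mainTheorem12 (d : Z -> Cx)
  (hdecay : forall eps, 0 < eps -> exists N : Z,
      forall n : Z, (N <= Z.abs n)%Z -> Cmod (d n) < eps)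
  (hi : forall n : Z, Im (d n) = 0 \/ Im (d (n + 1)%Z) = 0)
  (hii : forall N : Z, exists n : Z, (N <= Z.abs n)%Z /\ Im (d n) <> 0)
  (hsum : exists s, zsum_to (fun k => IZR (Z.abs k) * Rabs (Re (d k))) s) :
  forall lam : Cx, ~ boundary_eigenvalue d lam.
Proof.
  intros lam [[u [[U HU] [[n1 Hn1] Heig]]] [_ Hnint]].
  assert (HUp : 0 < U).
  { pose proof (Cnorm2_pos _ Hn1). pose proof (zsum_term _ _ HU (fun n => Cnorm2_nonneg (u n)) n1). lra. }
  (* Step 1: off the set Im d = Im lam, u vanishes, otherwise lam would be interior. *)
  assert (Hsupp : forall m, u m <> C0 -> Im (d m) = Im lam).
  { intros m Hm. apply NNPP. intros E. exact (Hnint (eigenvalue_interior d u lam U m Heig HU HUp Hm E)). }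
  pose proof (eigenvalue_support_real d u lam Heig (ex_intro _ n1 Hn1) hdecay Hsupp) as Hl0.
  assert (Hsupp0 : forall m, u m <> C0 -> Im (d m) = 0) by (intros m Hm; rewrite Hsupp; auto).
  assert (Hzeros : forall N, exists n, (N <= Z.abs n)%Z /\ Cnorm2 (u n) = 0).
  { intros N. destruct (hii N) as [n [Hn Hd]]. exists n. split; auto.
    destruct (classic (u n = C0)) as [->|Hu]; [unfold Cnorm2, C0, Re, Im; simpl; ring|].
    exfalso. exact (Hd (Hsupp0 n Hu)). }
  destruct hsum as [s Hs]. destruct (moment_tails_of_sum _ s Hs) as [HmP HmN].
  destruct (real_eigenvalue_components d u lam Heig Hl0 Hsupp0) as [HRe HIm].
  apply Hn1. apply Cx_ext.
  - refine (dominated_solution_vanishes _ _ _ _ U HRe HmP HmN HU _ Hzeros n1).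
    intros n. pose proof (Rle_0_sqr (Im (u n))). unfold Cnorm2, Rsqr in *. lra.
  - refine (dominated_solution_vanishes _ _ _ _ U HIm HmP HmN HU _ Hzeros n1).
    intros n. pose proof (Rle_0_sqr (Re (u n))). unfold Cnorm2, Rsqr in *. lra.
Qed.
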